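(* Let $d\ge3$, $\mathcal D=\mathbb S_1^{d-1}$, $M\in\mathrm{SL}(d+1,\mathbb R)$, $K=\mathcal G_{\mathcal D}(M)$, and let $(u_1,\vec v_1),\dots,(u_K,\vec v_K)\in\mathcal Q_{\mathcal D}(M)$ satisfy (V1)–(V3). If $1\le i,j\le K$ and either $-1<u_i<u_j\le-1/2$ or $1/2\le u_j<u_i<1$, then the angle between $\vec v_i$ and $\vec v_j$ is greater than $\pi/3$.
   Context: $\mathbb S_1^{d-1}$ is the unit sphere. Row vectors in $\mathbb R^{d+1}$ are written $(u,\vec v)$, $u\in\mathbb R$, $\vec v\in\mathbb R^d$; $\mathbb Z^{d+1}M=\{\vec mM:\vec m\in\mathbb Z^{d+1}\}$. For $\mathcal D\subseteq\mathbb S_1^{d-1}$: $\mathcal Q_{\mathcal D}(M,t)=\{(u,\vec v)\in\mathbb Z^{d+1}M:-t<u<1-t,\ \vec v\in\mathbb R_{>0}\mathcal D\}$ for $t\in(0,1)$; $\mathcal Q_{\mathcal D}(M)=\{(u,\vec v)\in\mathbb Z^{d+1}M:|u|<1,\ \vec v\in\mathbb R_{>0}\mathcal D\}$; $F_{\mathcal D}(M,t)=\min\{|\vec v|:(u,\vec v)\in\mathcal Q_{\mathcal D}(M,t)\}$; $\mathcal F_{\mathcal D}(M)=\{F_{\mathcal D}(M,t):0<t<1\}$, $\mathcal G_{\mathcal D}(M)=|\mathcal F_{\mathcal D}(M)|$. Conditions: (V1) $0<|\vec v_1|<\cdots<|\vec v_K|$; (V2) each $\delta\in\mathcal F_{\mathcal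 D}(M)$ equals $|\vec v_i|$ for some $i$; (V3) for each $i$ there is $t\in(0,1)$ with $(u_i,\vec v_i)\in\mathcal Q_{\mathcal D}(M,t)$ and $|\vec v_i|=F_{\mathcal D}(M,t)$. *)

From HB Require Import structures.
From mathcomp Require Import all_boot all_order all_algebra.
From mathcomp Require Import all_classical all_reals all_analysis.
From mathcomp Require Import Rstruct Rstruct_topology.
Set Implicit Arguments. Unset Strict Implicit. Unset Printing Implicit Defensive.
Import Order.TTheory GRing.Theory Num.Theory.
Local Open Scope ring_scope.
Local Open Scope classical_set_scope.

Notation RR := Rdefinitions.R.

Definition vdot (d : nat) (v w : 'rV[RR]_d) : RR := \sum_(k < d) v 0 k * w 0 k.
Definition vnorm (d : nat) (v : 'rV[RR]_d) : RR := Num.sqrt (vdot v v).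

Definition vangle (d : nat) (v w : 'rV[RR]_d) : RR :=
  acos (vdot v w / (vnorm v * vnorm w)).

Definition unit_sphere (d : nat) : set 'rV[RR]_d := [set w | vnorm w = 1].

Definition pos_cone (d : nat) (D : set 'rV[RR]_d) : set 'rV[RR]_d :=
  [set v | exists r : RR, 0 < r /\ exists2 w, D w & v = r *: w].

Definition mkvec (d : nat) (u : RR) (v : 'rV[RR]_d) : 'rV[RR]_(1 + d) :=
  row_mx (const_mx u) v.

Definition lattice (d : nat) (M : 'M[RR]_(1 + d)) : set 'rV[RR]_(1 + d) :=
  [set x | exists m : 'rV[int]_(1 + d), x = map_mx (fun z : int => z%:~R) m *m M].

Definition QDt (d : nat) (D : set 'rV[RR]_d) (M : 'M[RR]_(1 + d)) (t : RR)
  (u : RR) (v : 'rV[RR]_d) : Prop :=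
  lattice M (mkvec u v) /\ - t < u < 1 - t /\ pos_cone D v.

Definition QD (d : nat) (D : set 'rV[RR]_d) (M : 'M[RR]_(1 + d))
  (u : RR) (v : 'rV[RR]_d) : Prop :=
  lattice M (mkvec u v) /\ `|u| < 1 /\ pos_cone D v.

Definition isF (d : nat) (D : set 'rV[RR]_d) (M : 'M[RR]_(1 + d)) (t delta : RR)
  : Prop :=
  (exists u v, QDt D M t u v /\ vnorm v = delta) /\
  (forall u v, QDt D M t u v -> delta <= vnorm v).

Definition FD (d : nat) (D : set 'rV[RR]_d) (M : 'M[RR]_(1 + d)) : set RR :=
  [set delta | exists t : RR, 0 < t < 1 /\ isF D M t delta].

(** An angle of at most pi/3 between [v i] and [v j] means
    [vdot (v i) (v j) >= |v i| |v j| / 2], hence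
    [|v i - v j|^2 <= |v i|^2 + |v j|^2 - |v i| |v j| < max(|v i|, |v j|)^2],
    the norms being distinct by (V1).  The lattice vector
    (u i - u j, v i - v j) has first coordinate in (-1/2, 0) in the first case
    and in (0, 1/2) in the second, which puts it in Q_D(M, t) for every
    [t] in (0, 1) admissible for [u i] or [u j].  Taking the [t] that (V3)
    attaches to the longer of [v i], [v j] contradicts the minimality of
    F_D(M, t). *)

From HB Require Import structures.
From mathcomp Require Import all_boot all_order all_algebra.
From mathcomp Require Import all_classical all_reals all_analysis.
From mathcomp Require Import Rstruct Rstruct_topology.
From mathcomp Require Import ring lra.
Import Order.TTheory GRing.Theory Num.Theory.
Local Open Scope ring_scope.
Local Open Scope classical_set_scope.
Set Implicit Arguments. Unset Strict Implicit.

Section EuclideanGeometry.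
Variable d : nat.
Implicit Types a b c : 'rV[RR]_d.

Lemma vdotC a b : vdot a b = vdot b a.
Proof. by apply: eq_bigr => k _; rewrite mulrC. Qed.

Lemma vdotDl a b c : vdot (a + b) c = vdot a c + vdot b c.
Proof. by rewrite /vdot -big_split; apply: eq_bigr => k _; rewrite mxE mulrDl. Qed.

Lemma vdotDr a b c : vdot c (a + b) = vdot c a + vdot c b.
Proof. by rewrite vdotC vdotDl !(vdotC c). Qed.

Lemma vdotZl k a c : vdot (k *: a) c = k * vdot a c.
Proof. by rewrite /vdot mulr_sumr; apply: eq_bigr => i _; rewrite mxE mulrA. Qed.

Lemma vdotZr k a c : vdot c (k *: a) = k * vdot c a.
Proof. by rewrite vdotC vdotZl vdotC. Qed.

Lemma vdotNl a c : vdot (- a) c = - vdot a c.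
Proof. by rewrite -scaleN1r vdotZl mulN1r. Qed.

Lemma vdotNr a c : vdot c (- a) = - vdot c a.
Proof. by rewrite vdotC vdotNl vdotC. Qed.

Lemma vdot_ge0 a : 0 <= vdot a a.
Proof. by apply: sumr_ge0 => k _; rewrite -expr2 sqr_ge0. Qed.

Lemma vnorm_ge0 a : 0 <= vnorm a.
Proof. exact: sqrtr_ge0. Qed.

Lemma vnorm_sqr a : vnorm a ^+ 2 = vdot a a.
Proof. by rewrite /vnorm sqr_sqrtr // vdot_ge0. Qed.

Lemma vnormZ k a : vnorm (k *: a) = `|k| * vnorm a.
Proof. by rewrite /vnorm vdotZl vdotZr mulrA -expr2 sqrtrM ?sqr_ge0 // sqrtr_sqr. Qed.

Lemma vnormN a : vnorm (- a) = vnorm a.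
Proof. by rewrite -scaleN1r vnormZ normrN1 mul1r. Qed.

Lemma vnorm_gt0 a : a != 0 -> 0 < vnorm a.
Proof.
move=> a_neq0; rewrite lt_neqAle vnorm_ge0 andbT; apply: contra a_neq0 => /eqP a0.
have : vdot a a == 0 by rewrite -vnorm_sqr -a0 expr0n.
rewrite psumr_eq0 => [/allP a2_eq0|k _]; last by rewrite -expr2 sqr_ge0.
apply/eqP/matrixP => i k; rewrite ord1 mxE.
by apply/eqP; rewrite -sqrf_eq0 expr2 (eqP (a2_eq0 k (mem_index_enum _))).
Qed.

Lemma pos_cone_unit_sphere a : a != 0 -> pos_cone (@unit_sphere d) a.
Proof.
move=> a_neq0; have a_gt0 := vnorm_gt0 a_neq0.
exists (vnorm a); split => //; exists ((vnorm a)^-1 *: a).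
  by rewrite /unit_sphere /= vnormZ gtr0_norm ?invr_gt0 // mulVf ?gt_eqF.
by rewrite scalerA divff ?scale1r ?gt_eqF.
Qed.

Lemma vdot_ge_Nnorm a b :
  0 < vnorm a -> 0 < vnorm b -> - (vnorm a * vnorm b) <= vdot a b.
Proof.
move=> a_gt0 b_gt0; have := vdot_ge0 (vnorm b *: a + vnorm a *: b).
rewrite !vdotDl !vdotDr !vdotZl !vdotZr (vdotC b a) -!vnorm_sqr => h.
have := mulr_gt0 a_gt0 b_gt0; nra.
Qed.

Lemma vangleC a b : vangle a b = vangle b a.
Proof. by rewrite /vangle vdotC (mulrC (vnorm a)). Qed.

End EuclideanGeometry.

Lemma cos_pi3 : cos (pi / 3) = 1 / 2 :> RR.
Proof.
have pi_gt0 := @pi_gt0 RR.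
have cos_pi : cos (pi / 3 + pi / 3 + pi / 3) = -1 :> RR.
  by rewrite -cospi; congr cos; field.
rewrite !trigo.cosD !trigo.sinD in cos_pi.
set c := cos (pi / 3) in cos_pi *; set s := sin (pi / 3) in cos_pi.
have s2 : s ^+ 2 = 1 - c ^+ 2 by rewrite /s sin2cos2.
have c_gt0 : 0 < c by apply: cos_gt0_pihalf; apply/andP; split; lra.
(* the triple-angle formula turns cos pi = -1 into (c + 1) (2 c - 1)^2 = 0 *)
have : (c + 1) * (2 * c - 1) ^+ 2 = 0.
  have -> : (c + 1) * (2 * c - 1) ^+ 2 =
    ((c * c - s * s) * c - (s * c + c * s) * s) + 1 + 3 * c * (s ^+ 2 - (1 - c ^+ 2)).
    by ring.
  by rewrite cos_pi s2 subrr; ring.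
by move/eqP; rewrite mulf_eq0 sqrf_eq0 => /orP [/eqP|/eqP]; lra.
Qed.

Lemma pi3_lt_acos (x : RR) : -1 <= x -> x < 1 / 2 -> pi / 3 < acos x.
Proof.
move=> x_geN1 x_lt_half; have pi_gt0 := @pi_gt0 RR.
have x_in : -1 <= x <= 1 by apply/andP; split; lra.
rewrite -ltr_cos; last 2 first.
- by rewrite in_itv /=; apply/andP; split; lra.
- by rewrite in_itv /= acos_ge0 // acos_lepi.
by rewrite cos_pi3 acosK // in_itv.
Qed.

Section SmallAngle.
Variable d : nat.
Variables a b : 'rV[RR]_d.
Hypotheses (a_gt0 : 0 < vnorm a) (b_gt0 : 0 < vnorm b).
Hypothesis small_angle : vangle a b <= pi / 3.

Lemma vangle_le_pi3_vdot : vnorm a * vnorm b / 2 <= vdot a b.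
Proof.
have ab_gt0 : 0 < vnorm a * vnorm b by apply: mulr_gt0.
rewrite leNgt; apply/negP => vdot_lt.
suff : pi / 3 < vangle a b by rewrite ltNge small_angle.
apply: pi3_lt_acos.
  by rewrite ler_pdivlMr // mulN1r vdot_ge_Nnorm.
by rewrite ltr_pdivrMr //; lra.
Qed.

Lemma vnormB_lt : vnorm a < vnorm b -> vnorm (a - b) < vnorm b.
Proof.
move=> ab_lt; have half := vangle_le_pi3_vdot.
rewrite /vnorm ltr_sqrt; last by rewrite -vnorm_sqr exprn_gt0.
rewrite vdotDl !vdotDr !vdotNl !vdotNr (vdotC b a) opprK -!vnorm_sqr.
have : 0 < vnorm a * (vnorm b - vnorm a) by rewrite mulr_gt0 ?subr_gt0.
nra.
Qed.

End SmallAngle.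

Lemma lattice_mkvecB d (M : 'M[RR]_(1 + d)) u u' (v v' : 'rV[RR]_d) :
  lattice M (mkvec u v) -> lattice M (mkvec u' v') ->
  lattice M (mkvec (u - u') (v - v')).
Proof.
have -> : mkvec (u - u') (v - v') = mkvec u v - mkvec u' v'.
  rewrite /mkvec opp_row_mx add_row_mx; congr row_mx.
  by apply/matrixP => i j; rewrite !mxE.
move=> [m ->] [m' ->]; exists (m - m').
by rewrite -mulmxBl; congr (_ *m _); apply/matrixP => i j; rewrite !mxE intrB.
Qed.

Lemma subr_in_window (t a b x : RR) :
  (-1 < a /\ a < b /\ b <= - (1 / 2)) \/ (1 / 2 <= b /\ b < a /\ a < 1) ->
  0 < t < 1 -> x = a \/ x = b -> - t < x < 1 - t -> - t < a - b < 1 - t.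
Proof.
by move=> ab_case /andP[? ?] [->|->] /andP[? ?]; apply/andP;
  case: ab_case => [[? [? ?]]|[? [? ?]]]; split; lra.
Qed.

Theorem proposition6p3 (d : nat) (M : 'M[RR]_(1 + d)) (K : nat)
  (u : 'I_K -> RR) (v : 'I_K -> 'rV[RR]_d) :
  (3 <= d)%N ->
  \det M = 1 ->
  (* K = G_D(M) = |F_D(M)| *)
  (FD (@unit_sphere d) M #= `I_K)%card ->
  (forall i, QD (@unit_sphere d) M (u i) (v i)) ->
  (* (V1) *)
  (forall i, 0 < vnorm (v i)) ->
  (forall i j : 'I_K, (i < j)%N -> vnorm (v i) < vnorm (v j)) ->
  (* (V2) *)
  (forall delta, FD (@unit_sphere d) M delta -> exists i, delta = vnorm (v i)) ->
  (* (V3) *)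
  (forall i, exists t : RR, 0 < t < 1 /\
      QDt (@unit_sphere d) M t (u i) (v i) /\ isF (@unit_sphere d) M t (vnorm (v i))) ->
  forall i j : 'I_K,
    (-1 < u i /\ u i < u j /\ u j <= - (1 / 2)) \/
    (1 / 2 <= u j /\ u j < u i /\ u i < 1) ->
    pi / 3 < vangle (v i) (v j).
Proof.
move=> _ _ _ QD_v v_gt0 v_mono _ V3 i j u_case.
rewrite ltNge; apply/negP => small.
have u_neq : u i != u j by apply/eqP => u_eq; case: u_case; rewrite u_eq; lra.
have norm_neq : vnorm (v i) != vnorm (v j).
  case: (ltngtP i j) => [ij|ji|/val_inj ij]; last by rewrite ij eqxx in u_neq.
  - by rewrite lt_eqF ?v_mono.
  - by rewrite gt_eqF ?v_mono.
have v_neq : v i - v j != 0 by apply: contra norm_neq; rewrite subr_eq0 => /eqP ->.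
have not_minimal k : k = i \/ k = j -> ~ vnorm (v i - v j) < vnorm (v k).
  move=> k_ij; have [t [t01 [[_ [u_k _]] [_ minimal]]]] := V3 k.
  suff /minimal : QDt (@unit_sphere d) M t (u i - u j) (v i - v j).
    by rewrite leNgt => /negP.
  split; [|split].
  - by apply: lattice_mkvecB; [case: (QD_v i) | case: (QD_v j)].
  - by apply: subr_in_window u_case t01 _ u_k; case: k_ij => ->; [left|right].
  - exact: pos_cone_unit_sphere.
case: (ltgtP (vnorm (v i)) (vnorm (v j))) => [ij|ji|ij]; last by rewrite ij eqxx in norm_neq.
- exact: not_minimal j (or_intror erefl) (vnormB_lt (v_gt0 i) (v_gt0 j) small ij).
- rewrite vangleC in small; apply: (not_minimal i (or_introl erefl)).
  by rewrite -vnormN opprB; apply: vnormB_lt (v_gt0 j) (v_gt0 i) small ji.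
Qed.
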